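(* Let $\mathcal G$ be an ample groupoid, $\mathcal B$ a base of the topology of $\mathcal G$ consisting of compact open bisections, and $S$ an additively idempotent commutative semiring (i.e. $s+s=s$ for all $s\in S$). Then $A_S(\mathcal G)=\operatorname{Span}_S\{1_U : U \text{ compact open in } \mathcal G\}=\operatorname{Span}_S\{1_B : B\in\mathcal B\}$. If moreover $S=\mathbb B$ is the Boolean semifield, then $A_{\mathbb B}(\mathcal G)=\{1_U: U \text{ a compact open subset of } \mathcal G\}$.
   Context: A semiring is a set with commutative monoid addition (neutral element $0$), associative multiplication with identity $1$, distributive laws and $0$ absorbing. The Boolean semifield is $\mathbb B=(\{0,1\},\text{or},\text{and})$. An ample groupoid is a topological groupoid whose unit space $\mathcal G^{(0)}$ is locally compact Hausdorff and totally disconnected and whose source and range maps $s,r$ are local homeomorphisms ($\mathcal G$ need not be Hausdorff). A bisection is a subset on which $s$ and $r$ restrict to homeomorphisms onto their images. $1_U$ is the $S$-valued characteristic function of $U$. The Steinberg algebra $A_S(\mathcal G)$ is the set of functions $\mathcal G\to S$ of the form $\sum_{U\in F}s_U1_U$ with $F$ a finite set of compact open bisections and $s_U\in S$, with pointwise addition and convolution $(f*g)(\gamma)=\sum_{\alpha\beta=\gamma} f(\alpha)g(\beta)$. $\operatorname{Span}_S$ denotes the set of finite $S$-linear combinations. *)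

From HB Require Import structures.
From mathcomp Require Import all_boot all_order all_algebra.
From mathcomp Require Import boolp classical_sets topology.
Set Implicit Arguments. Unset Strict Implicit. Unset Printing Implicit Defensive.
Import GRing.Theory.
Local Open Scope classical_set_scope.
Local Open Scope ring_scope.

(* Groupoids: a (small) groupoid on the carrier G, with source s,      *)
(* range r, multiplication mul (meaningful on composable pairs,        *)
(* i.e. s x = r y) and inverse inv.  Units are the fixed points of s.  *)
Record groupoid (G : Type) := Groupoid {
  gsrc : G -> G;
  grng : G -> G;
  gmul : G -> G -> G;
  ginv : G -> G;
  gsrc_rng : forall x, gsrc (grng x) = grng x;
  grng_src : forall x, grng (gsrc x) = gsrc x;
  gsrc_mul : forall x y, gsrc x = grng y -> gsrc (gmul x y) = gsrc y;
  grng_mul : forall x y, gsrc x = grng y -> grng (gmul x y) = grng x;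
  gmulA : forall x y z, gsrc x = grng y -> gsrc y = grng z ->
            gmul (gmul x y) z = gmul x (gmul y z);
  gmul_rng : forall x, gmul (grng x) x = x;
  gmul_src : forall x, gmul x (gsrc x) = x;
  gsrc_inv : forall x, gsrc (ginv x) = grng x;
  grng_inv : forall x, grng (ginv x) = gsrc x;
  gmulVx : forall x, gmul (ginv x) x = gsrc x;
  gmulxV : forall x, gmul x (ginv x) = grng x
}.

Section Ample.
Variable (G : topologicalType) (g : groupoid G).

Definition unit_space : set G := [set x | gsrc g x = x].

Definition rel_open (A V : set G) : Prop :=
  exists W : set G, open W /\ V = W `&` A.

(* f : G -> G is a local homeomorphism onto the unit space (with its
   subspace topology): f is continuous with values in G^(0), and every
   point has an open neighbourhood U such that f is injective on U,
   f(U) is open in G^(0), and f|_U : U -> f(U) is open (so its inverse is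
   continuous). *)
Definition local_homeo_to_units (f : G -> G) : Prop :=
  continuous f /\ (forall x, unit_space (f x)) /\
  forall x, exists U : set G,
    [/\ open U, U x, {in U &, injective f}, rel_open unit_space (f @` U) &
        forall V, open V -> V `<=` U -> rel_open unit_space (f @` V)].

Definition ample_groupoid : Prop :=
  {within [set p : G * G | gsrc g p.1 = grng g p.2],
     continuous (fun p : G * G => gmul g p.1 p.2)} /\
  continuous (ginv g) /\
  (forall x y, unit_space x -> unit_space y -> x <> y ->
     exists U V : set G, [/\ open U, open V, U x, V y &
        U `&` V `&` unit_space = set0]) /\
  (forall x, unit_space x -> exists U K : set G,
     [/\ open U, U x, compact K, K `<=` unit_space & U `&` unit_space `<=` K]) /\
  totally_disconnected unit_space /\
  local_homeo_to_units (gsrc g) /\ local_homeo_to_units (grng g).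

Definition homeo_onto_image (f : G -> G) (U : set G) : Prop :=
  [/\ {in U &, injective f}, {within U, continuous f} &
      forall V, rel_open U V -> rel_open (f @` U) (f @` V)].

Definition bisection (U : set G) : Prop :=
  homeo_onto_image (gsrc g) U /\ homeo_onto_image (grng g) U.

Definition cpt_open (U : set G) : Prop := compact U /\ open U.

Definition topo_base (B : set (set G)) : Prop :=
  (forall b, B b -> open b) /\
  forall W x, open W -> W x -> exists2 b, B b & b x /\ b `<=` W.

Variable S : pzSemiRingType.

Definition charf (U : set G) : G -> S := fun x => if `[< U x >] then 1 else 0.

Definition span_char (F : set (set G)) : set (G -> S) :=
  [set f | exists l : seq (S * set G), (forall p, p \in l -> F p.2) /\
             f = fun x => \sum_(p <- l) p.1 * charf p.2 x].


Definition steinberg : set (G -> S) :=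
  span_char [set U | cpt_open U /\ bisection U].

End Ample.

Definition boolsr : Type := bool.
HB.instance Definition _ := Choice.copy boolsr bool.
Lemma boolsr_addA : associative (orb : boolsr -> boolsr -> boolsr).
Proof. by move=> [] [] []. Qed.
Lemma boolsr_addC : commutative (orb : boolsr -> boolsr -> boolsr).
Proof. by move=> [] []. Qed.
Lemma boolsr_add0 : left_id (false : boolsr) orb.
Proof. by move=> []. Qed.
HB.instance Definition _ :=
  GRing.isNmodule.Build boolsr boolsr_addA boolsr_addC boolsr_add0.
Lemma boolsr_mulA : associative (andb : boolsr -> boolsr -> boolsr).
Proof. by move=> [] [] []. Qed.
Lemma boolsr_mulC : commutative (andb : boolsr -> boolsr -> boolsr).
Proof. by move=> [] []. Qed.
Lemma boolsr_mul1 : left_id (true : boolsr) andb.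
Proof. by move=> []. Qed.
Lemma boolsr_mulDl : left_distributive (andb : boolsr -> boolsr -> boolsr) (@GRing.add boolsr).
Proof. by move=> [] [] []. Qed.
Lemma boolsr_mul0 : left_zero (GRing.zero : boolsr) andb.
Proof. by move=> []. Qed.
Lemma boolsr_10 : (true : boolsr) != GRing.zero.
Proof. by []. Qed.
HB.instance Definition _ := GRing.Nmodule_isComNzSemiRing.Build boolsr
  boolsr_mulA boolsr_mulC boolsr_mul1 boolsr_mulDl boolsr_mul0 boolsr_10.

Arguments charf {G} S U _.
Arguments span_char {G} S F _.
Arguments steinberg {G} g S _.

From HB Require Import structures.
From mathcomp Require Import all_boot all_order all_algebra.
From mathcomp Require Import boolp classical_sets topology.
From mathcomp Require Import finmap.
Set Implicit Arguments. Unset Strict Implicit. Unset Printing Implicit Defensive.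
Import GRing.Theory.
Local Open Scope classical_set_scope.
Local Open Scope ring_scope.

(* The whole argument rests on two facts.
   (1) Finite covers: if B is a base of compact open sets, every compact open
       set U is a finite union b_1 ∪ ... ∪ b_n of members of B (cover U by the
       members of B inside it and extract a finite subcover).
   (2) Idempotent addition turns sums of indicators into indicators of unions:
       if s + s = s in S, then 1_(V ∪ W) = 1_V + 1_W, hence
       1_(b_1 ∪ ... ∪ b_n) = 1_(b_1) + ... + 1_(b_n).
   Together they show that every 1_U with U compact open lies in Span_S of B,
   so Span_S{1_U : U compact open} ⊆ Span_S{1_b : b ∈ B}.  The chain
     A_S(G) ⊆ Span_S{compact open} ⊆ Span_S B ⊆ A_S(G)
   then closes, the outer inclusions being monotonicity of the span (B consists
   of compact open bisections).  For S = 𝔹, which is additively idempotent,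
   A_𝔹(G) is the span of indicators of compact open sets; by (2) and the fact
   that the only scalars are 0 and 1, such a combination is the indicator of a
   finite union of compact open sets, which is again compact open. *)

(* Compactness of a set in a topological space is equivalent to the open-cover
   property; the library states this for pointed spaces, so we point [G] at an
   element of the (nonempty) set under consideration. *)
Definition pointed_at {G : topologicalType} (x0 : G) : Type := G.
HB.instance Definition _ (G : topologicalType) (x0 : G) :=
  Topological.copy (pointed_at x0) G.
HB.instance Definition _ (G : topologicalType) (x0 : G) :=
  isPointed.Build (pointed_at x0) x0.

Lemma compact_cover_compact {G : topologicalType} {U : set G} :
  compact U -> cover_compact U.
Proof.
move=> cU I D f fop Ucov.
have [[x0 _]|U0] := pselect (exists x, U x); last first.
  by exists fset0 => // x Ux; case: U0; exists x.
have : @compact (pointed_at x0) U by [].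
by rewrite compact_cover; apply.
Qed.

Section IndicatorSums.
Variable G : topologicalType.

Definition union_seq (l : seq (set G)) : set G :=
  [set x | exists2 b, b \in l & b x].

Lemma union_seq_cons (b : set G) (l : seq (set G)) :
  union_seq (b :: l) = b `|` union_seq l.
Proof.
apply/seteqP; split=> x.
  by move=> [c]; rewrite in_cons => /orP[/eqP-> | cl] cx; [left | right; exists c].
case=> [bx | [c cl cx]]; first by exists b; rewrite ?mem_head.
by exists c; rewrite // in_cons cl orbT.
Qed.

Lemma cpt_open_union_seq (B : set (set G)) (U : set G) :
  topo_base B -> cpt_open U ->
  exists2 l : seq (set G), (forall b, b \in l -> B b) & U = union_seq l.
Proof.
move=> [Bopen Bbase] [cU oU].
have Ucover : U `<=` cover [set b | B b /\ b `<=` U] id.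
  move=> x Ux; have [b Bb [bx bU]] := Bbase U x oU Ux.
  by exists b.
have [D DB DU] := compact_cover_compact cU (fun b Db => Bopen b (proj1 Db)) Ucover.
exists (enum_fset D) => [b /DB /set_mem [] //|].
apply/seteqP; split=> x; first by move=> /DU [b Db bx]; exists b.
by move=> [b /DB /set_mem [_ bU] /bU].
Qed.

Variable S : pzSemiRingType.
Hypothesis addrI : forall s : S, s + s = s.

Lemma charf_setU (V W : set G) (x : G) :
  charf S (V `|` W) x = charf S V x + charf S W x.
Proof.
rewrite /charf; case: (asboolP (V x)) => Vx; case: (asboolP (W x)) => Wx.
- by rewrite asboolT ?addrI //; left.
- by rewrite asboolT ?addr0 //; left.
- by rewrite asboolT ?add0r //; right.
- by rewrite asboolF ?addr0 // => -[].
Qed.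

Lemma charf_union_seq (l : seq (set G)) (x : G) :
  charf S (union_seq l) x = \sum_(b <- l) charf S b x.
Proof.
elim: l => [|b l IH]; last by rewrite union_seq_cons charf_setU IH big_cons.
by rewrite big_nil /charf asboolF // => -[b]; rewrite in_nil.
Qed.

End IndicatorSums.

Section Spans.
Variables (G : topologicalType) (S : pzSemiRingType).

Lemma span_char_monotone (F1 F2 : set (set G)) :
  F1 `<=` F2 -> span_char S F1 `<=` span_char S F2.
Proof. by move=> F12 f [l [lF1 ->]]; exists l; split=> // p /lF1 /F12. Qed.

Lemma charf_in_span (F : set (set G)) (U : set G) :
  F U -> span_char S F (charf S U).
Proof.
move=> FU; exists [:: (1, U)]; split; first by move=> p; rewrite inE => /eqP->.
by apply: funext => x; rewrite big_seq1 mul1r.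
Qed.

Lemma span_cpt_open_sub_base (B : set (set G)) :
  (forall s : S, s + s = s) -> topo_base B ->
  span_char S (@cpt_open G) `<=` span_char S B.
Proof.
move=> addrI hB f [l [lcpt ->]].
elim: l lcpt => [|[s U] l IH] lcpt.
  by exists [::]; split=> //; apply: funext => x; rewrite big_nil.
have [|l' [l'B El']] := IH; first by move=> p pl; apply: lcpt; rewrite in_cons pl orbT.
have [lb lbB /= Ulb] := cpt_open_union_seq hB (lcpt (s, U) (mem_head _ _)).
exists ([seq (s, b) | b <- lb] ++ l'); split.
  by move=> p; rewrite mem_cat => /orP[/mapP[b /lbB Bb ->] | /l'B].
apply: funext => x; rewrite big_cons big_cat big_map /= -(congr1 (@^~ x) El').
by rewrite Ulb charf_union_seq // mulr_sumr.
Qed.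

End Spans.

Lemma boolsr_addI (s : boolsr) : s + s = s.
Proof. exact: orbb. Qed.

(* Over 𝔹 a combination of indicators of compact open sets is the indicator of
   the union of those sets carrying the scalar 1. *)
Lemma span_cpt_open_bool (G : topologicalType) :
  span_char boolsr (@cpt_open G) `<=` [set charf boolsr U | U in @cpt_open G].
Proof.
move=> f [l [lcpt ->]].
elim: l lcpt => [|[s V] l IH] lcpt.
  exists set0; first by split; [exact: compact0 | exact: open0].
  by apply: funext => x; rewrite big_nil /charf asboolF.
have [|U [cU oU] EU] := IH; first by move=> p pl; apply: lcpt; rewrite in_cons pl orbT.
have [/= cV /= oV] := lcpt (s, V) (mem_head _ _).
clear lcpt IH; case: s => /=.
- exists (V `|` U); first by split; [exact: compactU | exact: openU].
  apply: funext => x; rewrite big_cons charf_setU ?mul1r; last exact: boolsr_addI.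
  by rewrite EU.
- by exists U => //; apply: funext => x; rewrite big_cons EU mul0r add0r.
Qed.

Theorem lemma2p3 (G : topologicalType) (g : groupoid G) (B : set (set G)) :
  ample_groupoid g ->
  topo_base B ->
  (forall b, B b -> cpt_open b /\ bisection g b) ->
  (forall (S : comPzSemiRingType), (forall x : S, x + x = x) ->
     steinberg g S = span_char S (@cpt_open G) /\
     span_char S (@cpt_open G) = span_char S B) /\
  steinberg g boolsr = [set charf boolsr U | U in @cpt_open G].
Proof.
move=> _ hB Bcpt_bis.
have spans_eq (S : comPzSemiRingType) : (forall x : S, x + x = x) ->
    steinberg g S = span_char S (@cpt_open G) /\
    span_char S (@cpt_open G) = span_char S B.
  move=> addrI.
  have st_cpt : steinberg g S `<=` span_char S (@cpt_open G).
    by apply: span_char_monotone => U [].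
  have cpt_B := span_cpt_open_sub_base addrI hB.
  have B_st : span_char S B `<=` steinberg g S.
    by apply: span_char_monotone => b /Bcpt_bis.
  split; apply/seteqP; split=> //.
  - by move=> f /cpt_B /B_st.
  - by move=> f /B_st /st_cpt.
split=> //; have [-> _] := spans_eq boolsr boolsr_addI.
rewrite eqEsubset; split; first exact: span_cpt_open_bool.
by move=> _ [U cU <-]; exact: charf_in_span.
Qed.
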